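(* Let $K,G,m_0,A_g,B_g,\bar f_c,\bar f_t>0$, $m_g'(p)=A_g e^{\frac{p-\bar f_t/3}{B_g\bar f_c}}$, $e\in[0.5,1]$, and let $p^{tr}\in\mathbb R$, $\varrho^{tr}\ge0$, $r_e^{tr}\in\mathbb R$. For $\gamma\ge0$ let $\hat p_{tr}(\gamma)$ be the unique real $p_\gamma$ with $p_\gamma+\gamma Km_g'(p_\gamma)/\bar f_c=p^{tr}$, let $\hat\varrho_{tr}(\gamma)=\frac{1}{1+\gamma 6G/\bar f_c^2}\big(\varrho^{tr}-\gamma\frac{2Gm_0}{\sqrt6\bar f_c}\big)^+$, and $q_{tr}(\gamma)=\frac32\big(\frac{\hat\varrho_{tr}(\gamma)}{\bar f_c}\big)^2+m_0\big(\frac{\hat\varrho_{tr}(\gamma)r_e^{tr}}{\sqrt6\bar f_c}+\frac{\hat p_{tr}(\gamma)}{\bar f_c}\big)-1$. Then, with $p^a=\bar f_c/m_0$, $$q_{tr}\Big(\frac{\sqrt6\bar f_c\varrho^{tr}}{2Gm_0}\Big)\ge0\quad\text{if and only if}\quad p^{tr}-\frac{\sqrt6K}{2G}\frac{m_g'(p^a)}{m_0}\varrho^{tr}-p^a\ge0.$$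
   Context: $(x)^+=\max\{0,x\}$. In the paper, $p^{tr},\varrho^{tr},r_e^{tr}$ are the hydrostatic stress, deviatoric norm and Lode-angle function value of a trial stress, but the claim only uses them as the numbers specified. *)

From Stdlib Require Import Reals Lra.
Open Scope R_scope.

Definition pos_part (x : R) : R := Rmax 0 x.

Definition mg' (Ag Bg fbc fbt p : R) : R := Ag * exp ((p - fbt / 3) / (Bg * fbc)).

Definition is_p_hat (K Ag Bg fbc fbt ptr gamma p : R) : Prop :=
  p + gamma * K * mg' Ag Bg fbc fbt p / fbc = ptr.

Definition rho_hat (G m0 fbc rhotr gamma : R) : R :=
  / (1 + gamma * 6 * G / (fbc ^ 2)) *
  pos_part (rhotr - gamma * (2 * G * m0 / (sqrt 6 * fbc))).

(* q_tr(gamma), given the value phat = p_hat_tr(gamma) *)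
Definition q_tr (G m0 fbc rhotr retr gamma phat : R) : R :=
  let rh := rho_hat G m0 fbc rhotr gamma in
  3 / 2 * (rh / fbc) ^ 2 + m0 * (rh * retr / (sqrt 6 * fbc) + phat / fbc) - 1.

(* At the critical step [gstar] the deviatoric part [rho_hat] is exactly shut
   off, so [q_tr] reduces to [m0 / fbc * (p - pa)] and its sign is that of
   [p - pa].  With [c := gstar * K / fbc >= 0], the return-mapping equation
   reads [ptr = p + c * mg' p], and [x |-> x + c * mg' x] is increasing; hence
   [p >= pa] exactly when [ptr >= pa + c * mg' pa], which is the right-hand
   condition. *)
From Stdlib Require Import Reals Lra.
Open Scope R_scope.

Lemma mg'_le (Ag Bg fbc fbt x y : R) :
  0 < Ag -> 0 < Bg -> 0 < fbc -> x <= y ->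
  mg' Ag Bg fbc fbt x <= mg' Ag Bg fbc fbt y.
Proof.
  intros hA hB hc hxy; unfold mg'.
  apply Rmult_le_compat_l; [lra|].
  destruct (Rle_lt_or_eq_dec x y hxy) as [hlt | ->]; [|lra].
  left; apply exp_increasing; unfold Rdiv.
  apply Rmult_lt_compat_r; [|lra].
  apply Rinv_0_lt_compat, Rmult_lt_0_compat; lra.
Qed.

Lemma le_add_scal_nondecreasing (f : R -> R) (c x y : R) :
  (forall u v, u <= v -> f u <= f v) -> 0 <= c ->
  x <= y <-> x + c * f x <= y + c * f y.
Proof.
  intros hf hc; split; intro h.
  - pose proof (Rmult_le_compat_l c _ _ hc (hf x y h)); lra.
  - destruct (Rle_or_lt x y) as [|hyx]; [assumption|].
    pose proof (Rmult_le_compat_l c _ _ hc (hf y x (Rlt_le _ _ hyx))); lra.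
Qed.

Lemma rho_hat_shutoff (G m0 fbc rhotr : R) :
  0 < G -> 0 < m0 -> 0 < fbc ->
  rho_hat G m0 fbc rhotr (sqrt 6 * fbc * rhotr / (2 * G * m0)) = 0.
Proof.
  intros hG hm0 hfc.
  assert (hs : 0 < sqrt 6) by (apply sqrt_lt_R0; lra).
  unfold rho_hat, pos_part.
  replace (rhotr - _ * _) with 0 by (field; repeat split; lra).
  rewrite Rmax_left by lra; ring.
Qed.

Lemma q_tr_rho_hat_zero (G m0 fbc rhotr retr gamma p : R) :
  0 < fbc -> rho_hat G m0 fbc rhotr gamma = 0 ->
  q_tr G m0 fbc rhotr retr gamma p = m0 / fbc * p - 1.
Proof.
  intros hfc h0; unfold q_tr; cbv zeta; rewrite h0.
  assert (hs : 0 < sqrt 6) by (apply sqrt_lt_R0; lra).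
  field; split; lra.
Qed.

Theorem lemma2 (K G m0 Ag Bg fbc fbt e ptr rhotr retr : R)
  (hK : 0 < K) (hG : 0 < G) (hm0 : 0 < m0) (hAg : 0 < Ag) (hBg : 0 < Bg)
  (hfc : 0 < fbc) (hft : 0 < fbt) (he : 0.5 <= e <= 1) (hrho : 0 <= rhotr) :
  let gstar := sqrt 6 * fbc * rhotr / (2 * G * m0) in
  let pa := fbc / m0 in
  forall p : R, is_p_hat K Ag Bg fbc fbt ptr gstar p ->
  (q_tr G m0 fbc rhotr retr gstar p >= 0 <->
   ptr - sqrt 6 * K / (2 * G) * (mg' Ag Bg fbc fbt pa / m0) * rhotr - pa >= 0).
Proof.
  intros gstar pa p hp; unfold is_p_hat in hp.
  assert (hs : 0 < sqrt 6) by (apply sqrt_lt_R0; lra).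
  set (c := gstar * K / fbc).
  assert (hc : 0 <= c).
  { replace c with (rhotr * (sqrt 6 * K / (2 * G * m0)))
      by (unfold c, gstar; field; repeat split; lra).
    apply Rmult_le_pos; [lra|].
    left; apply Rdiv_lt_0_compat; [|apply Rmult_lt_0_compat]; nra. }
  assert (hptr : ptr = p + c * mg' Ag Bg fbc fbt p)
    by (rewrite <- hp; unfold c; field; lra).
  assert (hcoef : sqrt 6 * K / (2 * G) * (mg' Ag Bg fbc fbt pa / m0) * rhotr
                  = c * mg' Ag Bg fbc fbt pa)
    by (unfold c, gstar; field; repeat split; lra).
  rewrite q_tr_rho_hat_zero, hcoef, hptr by (try apply rho_hat_shutoff; lra).
  assert (hq : m0 / fbc * p - 1 = m0 / fbc * (p - pa)) by (unfold pa; field; lra).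
  assert (hmf : 0 < m0 / fbc) by (apply Rdiv_lt_0_compat; lra).
  pose proof (le_add_scal_nondecreasing (mg' Ag Bg fbc fbt) c pa p
                (fun u v => mg'_le Ag Bg fbc fbt u v hAg hBg hfc) hc) as hmono.
  rewrite hq; split; intro h.
  - assert (pa <= p) by (apply Rnot_lt_le; intro; nra); lra.
  - assert (pa <= p) by lra; nra.
Qed.
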